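(* Let $S$ be a monoid with the fem-property. Then an $S$-act is almost pure if and only if it is absolutely pure.
   Context: Let $S$ be a monoid. A (right) $S$-act is a set $A$ with a map $A\times S\to A$, $(a,s)\mapsto as$, such that $a1=a$ and $a(st)=(as)t$. An $S$-act is monogenic if it equals $cS$ for some element $c$, and finitely generated if it is a union of finitely many monogenic subacts. $S$ has the fem-property if every finitely generated $S$-act embeds (via an injective $S$-morphism) into a monogenic $S$-act. Given an $S$-act $A$ and a set $X$ of variables, an equation over $A$ is an expression of one of the forms $xs=yt$, $xs=xt$ or $xs=a$ with $x,y\in X$, $s,t\in S$, $a\in A$. If $A$ is a subact of $B$, a solution in $B$ of a set $\Sigma$ of such equations is a family $(b_x)_{x\in X}$ in $B$ with $b_xs=b_yt$ for each $xs=yt\in\Sigma$ and $b_xs=a$ for each $xs=a\in\Sigma$. $\Sigma$ is consistent if it has a solution in some $S$-act containing $A$ as a subact. $A$ is almost pure if every finite consistent set of equations over $A$ in one variable has a solution in $A$, and absolutely pure if every finite consistent set of equations over $A$ has a solution in $A$. *)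

From Stdlib Require Import List.
Import ListNotations.
Set Implicit Arguments.

Record monoid := Monoid {
  mcar :> Type;
  mmul : mcar -> mcar -> mcar;
  mone : mcar;
  mmulA : forall x y z, mmul x (mmul y z) = mmul (mmul x y) z;
  mmul1l : forall x, mmul mone x = x;
  mmul1r : forall x, mmul x mone = x
}.

Record act (S : monoid) := Act {
  acar :> Type;
  actf : acar -> S -> acar;
  actf1 : forall a, actf a (mone S) = a;
  actfM : forall a s t, actf a (mmul S s t) = actf (actf a s) t
}.
Arguments actf {S} _ _ _.

Definition is_morph {S : monoid} {A B : act S} (f : A -> B) : Prop :=
  forall (a : A) (s : S), f (actf A a s) = actf B (f a) s.

Definition injective {T U : Type} (f : T -> U) : Prop :=
  forall x y, f x = f y -> x = y.

Definition embedding {S : monoid} {A B : act S} (f : A -> B) : Prop :=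
  is_morph f /\ injective f.

Definition monogenic {S : monoid} (A : act S) : Prop :=
  exists c : A, forall a : A, exists s : S, a = actf A c s.

Definition fin_gen {S : monoid} (A : act S) : Prop :=
  exists cs : list A, forall a : A, exists c, In c cs /\ exists s : S, a = actf A c s.

Definition fem (S : monoid) : Prop :=
  forall A : act S, fin_gen A ->
    exists (B : act S) (f : A -> B), embedding f /\ monogenic B.

(* Equations over A in variables X: x s = y t (the form x s = x t being the
   case y = x), and x s = a. *)
Inductive equation (S : monoid) (A : act S) (X : Type) :=
  | EqVar : X -> S -> X -> S -> equation A X
  | EqConst : X -> S -> A -> equation A X.
Arguments EqVar {S A X}.
Arguments EqConst {S A X}.

Definition satisfies {S : monoid} {A B : act S} (f : A -> B) {X : Type}
  (b : X -> B) (e : equation A X) : Prop :=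
  match e with
  | EqVar x s y t => actf B (b x) s = actf B (b y) t
  | EqConst x s a => actf B (b x) s = f a
  end.

Definition solution_in {S : monoid} {A B : act S} (f : A -> B) {X : Type}
  (Sigma : list (equation A X)) (b : X -> B) : Prop :=
  forall e, In e Sigma -> satisfies f b e.

Definition solvable_in_self {S : monoid} {A : act S} {X : Type}
  (Sigma : list (equation A X)) : Prop :=
  exists b : X -> A, solution_in (fun a : A => a) Sigma b.

(* Consistent: solvable in some S-act containing A as a subact
   (i.e. into which A embeds). *)
Definition consistent {S : monoid} {A : act S} {X : Type}
  (Sigma : list (equation A X)) : Prop :=
  exists (B : act S) (f : A -> B), embedding f /\
    exists b : X -> B, solution_in f Sigma b.

Definition almost_pure {S : monoid} (A : act S) : Prop :=
  forall Sigma : list (equation A unit), consistent Sigma -> solvable_in_self Sigma.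

Definition absolutely_pure {S : monoid} (A : act S) : Prop :=
  forall (X : Type) (Sigma : list (equation A X)),
    consistent Sigma -> solvable_in_self Sigma.

(* Let Sigma be a finite system with a solution b in some B containing A.  The values of b on
   the variables of Sigma generate a finitely generated subact D of B, which by the
   fem-property embeds into a monogenic act cS; so b x corresponds to c u_x for some u_x in S.
   Gluing cS to B along D produces an act P containing A in which a single element c realises
   every b x as c u_x.  Hence the one-variable system obtained by substituting z u_x for x is
   consistent, almost purity solves it by some a in A, and x |-> a u_x solves Sigma in A. *)

From Stdlib Require Import List ClassicalEpsilon ProofIrrelevance.
Import ListNotations.
Set Implicit Arguments.
Unset Strict Implicit.

Lemma sig_val_inj {T : Type} (P : T -> Prop) (x y : sig P) :
  proj1_sig x = proj1_sig y -> x = y.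
Proof. apply eq_sig_hprop; intros; apply proof_irrelevance. Qed.

Lemma embedding_comp {S : monoid} {A B C : act S} (f : A -> B) (h : B -> C) :
  embedding f -> embedding h -> embedding (fun a => h (f a)).
Proof.
  intros [Hfm Hfi] [Hhm Hhi]; split.
  - intros a s; rewrite Hfm; apply Hhm.
  - intros a a' H; apply Hfi, Hhi, H.
Qed.

Section Pushout.

Variables (S : monoid) (D B E : act S) (i : D -> B) (g : D -> E).
Hypotheses (i_morph : is_morph i) (g_emb : embedding g).

(* Since [g] is injective, the pushout of [i] and [g] can be taken to be [B] together with
   the part of [E] outside the image of [g]. *)
Definition pushout_car : Type := (B + {e : E | ~ exists d, g d = e})%type.

Definition push (e : E) : pushout_car :=
  match excluded_middle_informative (exists d, g d = e) with
  | left H => inl (i (proj1_sig (constructive_indefinite_description _ H)))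
  | right H => inr (exist _ e H)
  end.

Definition pushout_actf (p : pushout_car) (s : S) : pushout_car :=
  match p with
  | inl b => inl (actf B b s)
  | inr e => push (actf E (proj1_sig e) s)
  end.

Lemma push_image (d : D) : push (g d) = inl (i d).
Proof.
  unfold push; destruct (excluded_middle_informative _) as [H|H].
  - destruct (constructive_indefinite_description _ H) as [d' Hd']; simpl.
    now rewrite (proj2 g_emb _ _ Hd').
  - exfalso; eauto.
Qed.

Lemma push_outside (e : E) (H : ~ exists d, g d = e) : push e = inr (exist _ e H).
Proof.
  unfold push; destruct (excluded_middle_informative _) as [H'|H'].
  - contradiction.
  - f_equal; now apply sig_val_inj.
Qed.

Lemma push_actf (e : E) (s : S) : push (actf E e s) = pushout_actf (push e) s.
Proof.
  destruct (classic (exists d, g d = e)) as [[d <-]|H].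
  - rewrite <- (proj1 g_emb), !push_image; simpl; now rewrite i_morph.
  - now rewrite (push_outside H).
Qed.

Definition pushout : act S.
Proof.
  refine (@Act S pushout_car pushout_actf _ _).
  - intros [b|[e He]]; simpl; rewrite actf1; [reflexivity | apply push_outside].
  - intros [b|[e He]] s t; simpl; rewrite actfM; [reflexivity | apply push_actf].
Defined.

Lemma push_morph : is_morph (push : E -> pushout).
Proof. exact push_actf. Qed.

Lemma inl_embedding : embedding (inl : B -> pushout).
Proof. split; [intros b s; reflexivity | now intros b b' [=]]. Qed.

End Pushout.

Section Span.

Variables (S : monoid) (B : act S) (X : Type) (b : X -> B) (vs : list X).

Definition in_span (d : B) : Prop := exists x s, In x vs /\ d = actf B (b x) s.

Lemma in_span_actf (d : B) (s : S) : in_span d -> in_span (actf B d s).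
Proof.
  intros (x & s' & Hx & ->); exists x, (mmul S s' s); split; [exact Hx|].
  now rewrite actfM.
Qed.

Definition span : act S.
Proof.
  refine (@Act S (sig in_span)
    (fun d s => exist _ (actf B (proj1_sig d) s) (in_span_actf s (proj2_sig d))) _ _).
  - intros d; apply sig_val_inj, actf1.
  - intros d s t; apply sig_val_inj, actfM.
Defined.

Definition span_gen {x : X} (Hx : In x vs) : span :=
  exist in_span (b x) (ex_intro _ x (ex_intro _ (mone S) (conj Hx (eq_sym (actf1 _ _))))).

Definition span_val (d : span) : B := proj1_sig d.

Lemma span_val_morph : is_morph span_val.
Proof. intros d s; reflexivity. Qed.

Lemma span_fin_gen : fin_gen span.
Proof.
  assert (Hgens : forall l, incl l vs -> exists cs : list span,
            forall x (Hx : In x vs), In x l -> In (span_gen Hx) cs).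
  { induction l as [|x l IH]; intros Hl.
    - now exists [].
    - destruct IH as [cs Hcs]; [intros y Hy; apply Hl; now right|].
      exists (span_gen (Hl x (or_introl eq_refl)) :: cs).
      intros y Hy [<-|Hyl]; [left | right; now apply Hcs].
      now apply sig_val_inj. }
  destruct (Hgens vs (fun x h => h)) as [cs Hcs].
  exists cs; intros [d (x & s & Hx & Hd)].
  exists (span_gen Hx); split; [now apply Hcs|].
  exists s; now apply sig_val_inj.
Qed.

End Span.

Definition eq_vars {S : monoid} {A : act S} {X : Type} (e : equation A X) : list X :=
  match e with
  | EqVar x _ y _ => [x; y]
  | EqConst x _ _ => [x]
  end.

Definition sys_vars {S : monoid} {A : act S} {X : Type} (Sigma : list (equation A X)) : list X :=
  flat_map eq_vars Sigma.

Lemma solution_in_ext {S : monoid} {A B : act S} (f : A -> B) {X : Type}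
    (Sigma : list (equation A X)) (b b' : X -> B) :
  (forall x, In x (sys_vars Sigma) -> b x = b' x) ->
  solution_in f Sigma b -> solution_in f Sigma b'.
Proof.
  intros Hbb' Hb e He.
  assert (Hv : forall x, In x (eq_vars e) -> b x = b' x).
  { intros x Hx; apply Hbb', in_flat_map; eauto. }
  specialize (Hb e He); destruct e as [x s y t|x s a]; simpl in *.
  - now rewrite <- !Hv by auto.
  - now rewrite <- Hv by auto.
Qed.

Lemma solution_in_morph {S : monoid} {A B C : act S} (f : A -> B) (h : B -> C) {X : Type}
    (Sigma : list (equation A X)) (b : X -> B) :
  is_morph h -> solution_in f Sigma b ->
  solution_in (fun a => h (f a)) Sigma (fun x => h (b x)).
Proof.
  intros Hh Hb e He; specialize (Hb e He).
  destruct e; simpl in *; now rewrite <- !Hh, Hb.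
Qed.

Definition subst_eq {S : monoid} {A : act S} {X : Type} (u : X -> S) (e : equation A X)
  : equation A unit :=
  match e with
  | EqVar x s y t => EqVar tt (mmul S (u x) s) tt (mmul S (u y) t)
  | EqConst x s a => EqConst tt (mmul S (u x) s) a
  end.

Lemma solution_in_subst {S : monoid} {A B : act S} (f : A -> B) {X : Type}
    (Sigma : list (equation A X)) (u : X -> S) (p : B) :
  solution_in f (map (subst_eq u) Sigma) (fun _ => p) <->
  solution_in f Sigma (fun x => actf B p (u x)).
Proof.
  split.
  - intros H e He; specialize (H _ (in_map _ _ _ He)).
    destruct e; simpl in *; now rewrite <- !actfM.
  - intros H e' He'; apply in_map_iff in He' as [e [<- He]]; specialize (H e He).
    destruct e; simpl in *; now rewrite !actfM.
Qed.

Lemma consistent_subst_one_variable {S : monoid} (HS : fem S) {A B : act S} (f : A -> B)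
    {X : Type} (Sigma : list (equation A X)) (b : X -> B) :
  embedding f -> solution_in f Sigma b ->
  exists u : X -> S, consistent (map (subst_eq u) Sigma).
Proof.
  intros Hf Hb.
  set (vs := sys_vars Sigma).
  destruct (HS _ (span_fin_gen b vs)) as (E & g & Hg & c & Hc).
  assert (Hu : exists u : X -> S,
             forall x (Hx : In x vs), g (span_gen b Hx) = actf E c (u x)).
  { apply (choice (fun x ux => forall Hx : In x vs, g (span_gen b Hx) = actf E c ux)).
    intros x.
    destruct (classic (In x vs)) as [Hx|Hx].
    - destruct (Hc (g (span_gen b Hx))) as [ux Hux]; exists ux.
      intros Hx'; rewrite <- Hux; f_equal; now apply sig_val_inj.
    - exists (mone S); intros Hx'; contradiction. }
  destruct Hu as [u Hu]; exists u.
  pose proof (@span_val_morph _ _ _ b vs) as Hval.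
  set (P := pushout Hval Hg).
  exists P, (fun a => inl (f a) : P); split; [apply (embedding_comp Hf), inl_embedding|].
  exists (fun _ => push (span_val (b:=b) (vs:=vs)) g c : P).
  apply solution_in_subst.
  apply (solution_in_ext (b := fun x => inl (b x) : P)).
  - intros x Hx.
    rewrite <- (push_morph Hval Hg), <- (Hu x Hx).
    now rewrite push_image by exact Hg.
  - apply solution_in_morph; [exact (proj1 (inl_embedding Hval Hg)) | exact Hb].
Qed.

Theorem mainTheorem3 (S : monoid) (HS : fem S) (A : act S) :
  almost_pure A <-> absolutely_pure A.
Proof.
  split; [|intros H Sigma; apply H].
  intros HA X Sigma (B & f & Hf & b & Hb).
  destruct (consistent_subst_one_variable HS Hf Hb) as [u Hcons].
  destruct (HA _ Hcons) as [z Hz].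
  exists (fun x => actf A (z tt) (u x)).
  apply solution_in_subst, (solution_in_ext (b := z)); [now intros [] _ | exact Hz].
Qed.
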